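(* Let $B$ be a $\Sigma$-ring containing a $\Sigma$-pseudofield $L$ as a $\Sigma$-subring such that $C_L:=L^\sigma$ is a $\Sigma_1$-closed pseudofield. Let $C\subseteq B^\sigma$ be a $\Sigma_1$-stable subring with $C_L\subseteq C$. Then the natural $\Sigma$-homomorphism $L\otimes_{C_L}C\to B$, $l\otimes c\mapsto lc$, is injective, so that $L\cdot C\cong L\otimes_{C_L}C$, where $L\cdot C$ is the subring of $B$ generated by $L$ and $C$.
   Context: All rings are commutative with $1$. Fix $\Sigma_0=\mathbb Z$ with generator $\sigma$, a finite abelian group $\Sigma_1=\mathbb Z/t_1\mathbb Z\oplus\dots\oplus\mathbb Z/t_s\mathbb Z$ ($t_i\ge2$), and $\Sigma=\Sigma_0\oplus\Sigma_1$. For a subgroup $\Sigma'\subseteq\Sigma$, a $\Sigma'$-ring is a ring with an action of $\Sigma'$ by ring automorphisms; $\Sigma'$-ideals are $\Sigma'$-stable ideals; $R^\sigma$ denotes the $\sigma$-invariants. A $\Sigma'$-ring is $\Sigma'$-simple if its only $\Sigma'$-ideals are $0$ and itself ($\neq0$). A ring is absolutely flat if every module over it is flat. A $\Sigma'$-pseudofield is an absolutely flat $\Sigma'$-simple ring. $C\{y_1,\dots,y_n\}_{\Sigma_1}$ is the polynomial ring over $C$ in indeterminates $\tau y_i$ ($\tau\in\Sigma_1$) with natural $\Sigma_1$-action; $\mathbb V(E)$ is the common zero set in $C^n$ and $\mathbb I(X)$ the ideal of polynomials vanishing on $X$. A $\Sigma_1$-pseudofield $C$ is $\Sigma_1$-closed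 if $\sqrt I=\mathbb I(\mathbb V(I))$ for every $n$ and every $\Sigma_1$-ideal $I\subseteq C\{y_1,\dots,y_n\}_{\Sigma_1}$. The $\Sigma$-action on $L\otimes_{C_L}C$ is the diagonal one. *)

From HB Require Import structures.
From mathcomp Require Import all_boot all_order all_algebra all_fingroup.
From mathcomp Require Import mpoly.
Set Implicit Arguments. Unset Strict Implicit. Unset Printing Implicit Defensive.
Import GRing.Theory.
Local Open Scope ring_scope.

(* Sigma = Z (+) Sigma_1, with Sigma_1 a finite abelian
   group (gT : finGroupType, [set: gT] abelian).  An action of Sigma on
   a ring B is given by a ring automorphism sigma (image of the generator
   of Z) and an action [act] of Sigma_1 by ring endomorphisms
   (automatically automorphisms) commuting with sigma. *)

Definition Sigma1_action (gT : finGroupType) (B : comNzRingType)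
  (act : gT -> B -> B) : Prop :=
  [/\ forall g, monoid_morphism (act g) /\ {morph act g : x y / x + y},
      forall x, act 1%g x = x &
      forall g h x, act (g * h)%g x = act g (act h x)].

Definition Sigma_action (gT : finGroupType) (B : comNzRingType)
  (sigma : B -> B) (act : gT -> B -> B) : Prop :=
  [/\ Sigma1_action act,
      monoid_morphism sigma /\ {morph sigma : x y / x + y},
      bijective sigma &
      forall g x, sigma (act g x) = act g (sigma x)].

Definition is_subring (B : comNzRingType) (S : {pred B}) : Prop :=
  [/\ 1 \in S,
      forall x y, x \in S -> y \in S -> x - y \in S &
      forall x y, x \in S -> y \in S -> x * y \in S].

Definition is_ideal_of (B : comNzRingType) (S : {pred B}) (I : B -> Prop) : Prop :=
  [/\ forall x, I x -> x \in S,
      I 0,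
      forall x y, I x -> I y -> I (x - y) &
      forall a x, a \in S -> I x -> I (a * x)].

Definition Sigma1_stable_set (gT : finGroupType) (B : comNzRingType)
  (act : gT -> B -> B) (I : B -> Prop) : Prop :=
  forall g x, I x -> I (act g x).

Definition Sigma_stable_set (gT : finGroupType) (B : comNzRingType)
  (sigma : B -> B) (act : gT -> B -> B) (I : B -> Prop) : Prop :=
  Sigma1_stable_set act I /\ forall x, I x <-> I (sigma x).

(* "stable" selects the relevant group (Sigma or Sigma_1). *)
Definition simple_for (B : comNzRingType) (S : {pred B})
  (stable : (B -> Prop) -> Prop) : Prop :=
  (exists x, x \in S /\ x <> 0) /\
  forall I : B -> Prop, is_ideal_of S I -> stable I ->
    (forall x, I x <-> x = 0) \/ (forall x, I x <-> x \in S).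

(* Absolutely flat, in its von Neumann regular form. *)
Definition absolutely_flat (B : comNzRingType) (S : {pred B}) : Prop :=
  forall a, a \in S -> exists2 x, x \in S & a = a * a * x.

Definition Sigma_pseudofield (gT : finGroupType) (B : comNzRingType)
  (sigma : B -> B) (act : gT -> B -> B) (S : {pred B}) : Prop :=
  absolutely_flat S /\ simple_for S (Sigma_stable_set sigma act).

Definition Sigma1_pseudofield (gT : finGroupType) (B : comNzRingType)
  (act : gT -> B -> B) (S : {pred B}) : Prop :=
  absolutely_flat S /\ simple_for S (Sigma1_stable_set act).

(* Sigma_1-polynomials: C{y_1..y_n}_{Sigma_1} is realized inside
   {mpoly B[nvar n]}, the variable tau y_i being 'X_(enum_rank (i, tau)),
   as the polynomials with coefficients in C. *)

Definition nvar (gT : finGroupType) (n : nat) : nat := #|{: 'I_n * gT}|.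

Definition spoly_var (gT : finGroupType) (n : nat) (i : 'I_n) (t : gT)
  : 'I_(nvar gT n) := enum_rank (i, t).

(* action of tau on polynomials: on coefficients, and tau' y_i |-> (tau tau') y_i *)
Definition spoly_act (gT : finGroupType) (B : comNzRingType) (act : gT -> B -> B)
  (n : nat) (t : gT) (p : {mpoly B[nvar gT n]}) : {mpoly B[nvar gT n]} :=
  mmap (fun b => (act t b)%:MP)
       (fun j => 'X_(spoly_var (enum_val j).1 (t * (enum_val j).2)%g)) p.

Definition spoly_eval (gT : finGroupType) (B : comNzRingType) (act : gT -> B -> B)
  (n : nat) (x : 'I_n -> B) (p : {mpoly B[nvar gT n]}) : B :=
  p.@[fun j => act (enum_val j).2 (x (enum_val j).1)].

Definition is_Sigma1_poly_ideal (gT : finGroupType) (B : comNzRingType)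
  (act : gT -> B -> B) (C : {pred B}) (n : nat)
  (I : {mpoly B[nvar gT n]} -> Prop) : Prop :=
  [/\ forall p, I p -> p \is a mpolyOver _ C,
      I 0,
      forall p q, I p -> I q -> I (p - q),
      forall a p, a \is a mpolyOver _ C -> I p -> I (a * p) &
      forall t p, I p -> I (spoly_act act t p)].

Definition spoly_V (gT : finGroupType) (B : comNzRingType) (act : gT -> B -> B)
  (C : {pred B}) (n : nat) (I : {mpoly B[nvar gT n]} -> Prop) (x : 'I_n -> B)
  : Prop :=
  (forall i, x i \in C) /\ forall p, I p -> spoly_eval act x p = 0.

Definition Sigma1_closed (gT : finGroupType) (B : comNzRingType)
  (act : gT -> B -> B) (C : {pred B}) : Prop :=
  Sigma1_pseudofield act C /\
  forall (n : nat) (I : {mpoly B[nvar gT n]} -> Prop),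
    is_Sigma1_poly_ideal act C I ->
    forall p, p \is a mpolyOver _ C ->
      ((exists m : nat, I (p ^+ m)) <->
       (forall x, spoly_V act C I x -> spoly_eval act x p = 0)).

(* The tensor product L (x)_{C_L} C, as the free abelian group on L x C
   modulo the bilinearity / balancedness relations.  A formal
   Z-combination is a list of ((l, c), k) meaning sum k (l (x) c). *)

Definition fsum (B : comNzRingType) := seq ((B * B) * int).

Definition fcoef (B : comNzRingType) (s : fsum B) (lc : B * B) : int :=
  \sum_(e <- s | e.1 == lc) e.2.

Definition fsum_on (B : comNzRingType) (L C : {pred B}) (s : fsum B) : Prop :=
  forall e, e \in s -> (e.1.1 \in L) && (e.1.2 \in C).

Inductive tensor_rel (B : comNzRingType) (L C CL : {pred B}) : fsum B -> Prop :=
| trel_nil : tensor_rel L C CL [::]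
| trel_addl l l' c : l \in L -> l' \in L -> c \in C ->
    tensor_rel L C CL [:: ((l + l', c), 1); ((l, c), -1); ((l', c), -1)]
| trel_addr l c c' : l \in L -> c \in C -> c' \in C ->
    tensor_rel L C CL [:: ((l, c + c'), 1); ((l, c), -1); ((l, c'), -1)]
| trel_bal l a c : l \in L -> a \in CL -> c \in C ->
    tensor_rel L C CL [:: ((l * a, c), 1); ((l, a * c), -1)]
| trel_cat s t : tensor_rel L C CL s -> tensor_rel L C CL t ->
    tensor_rel L C CL (s ++ t)
| trel_scale (z : int) s : tensor_rel L C CL s ->
    tensor_rel L C CL [seq (e.1, e.2 * z) | e <- s].

Definition tensor_zero (B : comNzRingType) (L C CL : {pred B}) (s : fsum B) : Prop :=
  exists2 r, tensor_rel L C CL r & forall lc, fcoef s lc = fcoef r lc.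

Definition tensor_mult (B : comNzRingType) (s : fsum B) : B :=
  \sum_(e <- s) (e.1.1 * e.1.2) *~ e.2.

Definition tensor_mult_injective (B : comNzRingType) (L C CL : {pred B}) : Prop :=
  forall s : fsum B, fsum_on L C s -> tensor_mult s = 0 -> tensor_zero L C CL s.

(* Sigma_1-closedness of C_L provides an idempotent u in C_L whose Sigma_1-translates
   are pairwise orthogonal and sum to 1: the indicator of the identity in B^Sigma_1
   satisfies these equations, so the Sigma_1-ideal of polynomials over C_L vanishing
   there is proper and, by the Nullstellensatz, has a zero in C_L.  Then L is the direct
   sum of the t(u) L, and uL is sigma-simple, since the Sigma_1-translates of a nonzero
   sigma-stable ideal of uL generate a Sigma-ideal of L.  The classical argument for
   fields now works in uL: normalize a relation over uL among elements of C so
   that its leading coefficient is u; subtracting its sigma-image shows that its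
   coefficients lie in C_L.  Hence uL (x) C embeds in B, and translating by Sigma_1
   gives the same for L (x) C. *)

From HB Require Import structures.
From mathcomp Require Import all_boot all_order all_algebra all_fingroup.
From mathcomp Require Import mpoly.
From Stdlib Require Import Classical.
Set Implicit Arguments. Unset Strict Implicit. Unset Printing Implicit Defensive.
Import GRing.Theory.
Local Open Scope ring_scope.

Lemma is_subring_closed (B : comNzRingType) (S : {pred B}) :
  is_subring S -> GRing.subring_closed S.
Proof. by case. Qed.

Lemma morph_add_zmod_morphism (U V : zmodType) (f : U -> V) :
  {morph f : x y / x + y} -> zmod_morphism f.
Proof. by move=> fD x y; apply: (addIr (f y)); rewrite -fD !subrK. Qed.

Section FormalSums.
Variables (B : comNzRingType) (L C CL : {pred B}).
Hypotheses (HL : is_subring L) (HC : is_subring C).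
#[local] HB.instance Definition _ := GRing.isSubringClosed.Build B L (is_subring_closed HL).
#[local] HB.instance Definition _ := GRing.isSubringClosed.Build B C (is_subring_closed HC).

Lemma fcoef_nil lc : fcoef ([::] : fsum B) lc = 0.
Proof. by rewrite /fcoef big_nil. Qed.

Lemma fcoef_cons e (s : fsum B) lc :
  fcoef (e :: s) lc = (if e.1 == lc then e.2 else 0) + fcoef s lc.
Proof. by rewrite /fcoef big_cons; case: ifP; rewrite ?add0r. Qed.

Lemma fcoef_cat (s t : fsum B) lc : fcoef (s ++ t) lc = fcoef s lc + fcoef t lc.
Proof. by rewrite /fcoef big_cat. Qed.

Lemma fcoef_map (X : Type) (r : seq X) (F : X -> (B * B) * int) lc :
  fcoef (map F r) lc = \sum_(x <- r) (if (F x).1 == lc then (F x).2 else 0).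
Proof. by rewrite /fcoef big_map big_mkcond. Qed.

Lemma fcoef_flatten (ss : seq (fsum B)) lc :
  fcoef (flatten ss) lc = \sum_(s <- ss) fcoef s lc.
Proof.
by elim: ss => [|s ss IH]; rewrite ?big_nil ?fcoef_nil // big_cons fcoef_cat IH.
Qed.

Definition fscale (z : int) (s : fsum B) : fsum B := [seq (e.1, e.2 * z) | e <- s].

Lemma fcoef_scale z (s : fsum B) lc : fcoef (fscale z s) lc = fcoef s lc * z.
Proof. by rewrite /fcoef big_map mulr_suml. Qed.

Lemma fscale_map1 (X : Type) (r : seq X) (f : X -> B * B) z :
  [seq (f x, z) | x <- r] = fscale z [seq (f x, 1) | x <- r].
Proof. by rewrite /fscale -map_comp; apply: eq_map => x; rewrite /= mul1r. Qed.

Lemma fscale1 (lc : B * B) z : [:: (lc, z)] = fscale z [:: (lc, 1)].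
Proof. by rewrite /fscale /= mul1r. Qed.

Definition rel_coef (f : B * B -> int) : Prop :=
  exists2 r, tensor_rel L C CL r & forall lc, f lc = fcoef r lc.

Lemma rel_coef_ext f g : f =1 g -> rel_coef f -> rel_coef g.
Proof. by move=> fg [r hr hf]; exists r => // lc; rewrite -fg. Qed.

Lemma rel_coef0 : rel_coef (fun=> 0).
Proof. by exists [::]; [constructor | move=> lc; rewrite fcoef_nil]. Qed.

Lemma rel_coefD f g : rel_coef f -> rel_coef g -> rel_coef (fun lc => f lc + g lc).
Proof.
move=> [r hr hf] [r' hr' hg]; exists (r ++ r'); first exact: trel_cat.
by move=> lc; rewrite fcoef_cat hf hg.
Qed.

Lemma rel_coefZ z f : rel_coef f -> rel_coef (fun lc => f lc * z).
Proof.
move=> [r hr hf]; exists (fscale z r); first exact: trel_scale.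
by move=> lc; rewrite fcoef_scale hf.
Qed.

Definition tensor_eq (s t : fsum B) := rel_coef (fun lc => fcoef s lc - fcoef t lc).

Lemma tensor_eq_coef (s t : fsum B) : fcoef s =1 fcoef t -> tensor_eq s t.
Proof. by move=> e; apply: rel_coef_ext rel_coef0 => lc; rewrite e subrr. Qed.

Lemma tensor_eq_refl (s : fsum B) : tensor_eq s s.
Proof. exact: tensor_eq_coef. Qed.

Lemma tensor_eq_sym (s t : fsum B) : tensor_eq s t -> tensor_eq t s.
Proof. by move/(rel_coefZ (-1)); apply: rel_coef_ext => lc; rewrite mulrN1 opprB. Qed.

Lemma tensor_eq_trans (s t w : fsum B) :
  tensor_eq s t -> tensor_eq t w -> tensor_eq s w.
Proof. by move=> h1 h2; apply: rel_coef_ext (rel_coefD h1 h2) => lc; rewrite addrA subrK. Qed.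

Lemma tensor_eq_cat (s1 s2 t1 t2 : fsum B) :
  tensor_eq s1 t1 -> tensor_eq s2 t2 -> tensor_eq (s1 ++ s2) (t1 ++ t2).
Proof.
move=> h1 h2; apply: rel_coef_ext (rel_coefD h1 h2) => lc.
by rewrite !fcoef_cat opprD addrACA.
Qed.

Lemma tensor_eq_scale z (s t : fsum B) :
  tensor_eq s t -> tensor_eq (fscale z s) (fscale z t).
Proof. by move/(rel_coefZ z); apply: rel_coef_ext => lc; rewrite !fcoef_scale mulrBl. Qed.

Lemma tensor_eq_flatten (X : eqType) (r : seq X) (F G : X -> fsum B) :
  {in r, forall x, tensor_eq (F x) (G x)} ->
  tensor_eq (flatten (map F r)) (flatten (map G r)).
Proof.
elim: r => [|x r IH] FG /=; first exact: tensor_eq_refl.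
apply: tensor_eq_cat; first by apply: FG; rewrite mem_head.
by apply: IH => y yr; apply: FG; rewrite in_cons yr orbT.
Qed.

Lemma tensor_eq_map (X : eqType) (r : seq X) (F G : X -> (B * B) * int) :
  {in r, forall x, tensor_eq [:: F x] [:: G x]} -> tensor_eq (map F r) (map G r).
Proof.
move=> FG; rewrite -[map F r]flatten_seq1 -[map G r]flatten_seq1 -!map_comp.
exact: tensor_eq_flatten.
Qed.

Lemma tensor_eq_exchange (X Y : Type) (r : seq X) (r' : seq Y) (F : X -> Y -> (B * B) * int) :
  tensor_eq (flatten [seq [seq F x y | y <- r'] | x <- r])
            (flatten [seq [seq F x y | x <- r] | y <- r']).
Proof.
apply: tensor_eq_coef => lc; rewrite !fcoef_flatten !big_map.
under eq_bigr => x _ do rewrite fcoef_map.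
under [RHS]eq_bigr => y _ do rewrite fcoef_map.
exact: exchange_big.
Qed.

Lemma tensor_zeroP (s : fsum B) : tensor_zero L C CL s <-> tensor_eq s [::].
Proof.
by split=> -[r hr e]; exists r => // lc; rewrite ?e -?e fcoef_nil subr0.
Qed.

Lemma tensor_eq_flatten_nil (X : Type) (r : seq X) :
  tensor_eq (flatten [seq [::] | _ <- r]) [::].
Proof. by apply: tensor_eq_coef => lc; rewrite fcoef_flatten big_map big1 ?fcoef_nil. Qed.

Lemma tensor_eq_rel (r : fsum B) (s t : fsum B) :
  tensor_rel L C CL r -> fcoef r =1 (fun lc => fcoef s lc - fcoef t lc) -> tensor_eq s t.
Proof. by move=> hr e; exists r => // lc; rewrite e. Qed.

Lemma tensor_eq_addl l l' c : l \in L -> l' \in L -> c \in C ->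
  tensor_eq [:: ((l + l', c), 1)] [:: ((l, c), 1); ((l', c), 1)].
Proof.
move=> hl hl' hc; apply: tensor_eq_rel (trel_addl CL hl hl' hc) _ => lc.
rewrite !fcoef_cons !fcoef_nil !addr0.
by do 3!case: (_ == lc); rewrite ?subr0 ?opprD ?addrA.
Qed.

Lemma tensor_eq_addr l c c' : l \in L -> c \in C -> c' \in C ->
  tensor_eq [:: ((l, c + c'), 1)] [:: ((l, c), 1); ((l, c'), 1)].
Proof.
move=> hl hc hc'; apply: tensor_eq_rel (trel_addr CL hl hc hc') _ => lc.
rewrite !fcoef_cons !fcoef_nil !addr0.
by do 3!case: (_ == lc); rewrite ?subr0 ?opprD ?addrA.
Qed.

Lemma tensor_eq_bal l a c : l \in L -> a \in CL -> c \in C ->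
  tensor_eq [:: ((l * a, c), 1)] [:: ((l, a * c), 1)].
Proof.
move=> hl ha hc; apply: tensor_eq_rel (trel_bal hl ha hc) _ => lc.
rewrite !fcoef_cons !fcoef_nil !addr0.
by do 2!case: (_ == lc); rewrite ?subr0.
Qed.

Lemma tensor_eq0l c : c \in C -> tensor_eq [:: ((0, c), 1)] [::].
Proof.
move=> hc; have := tensor_eq_sym (tensor_eq_addl (rpred0 L) (rpred0 L) hc).
rewrite addr0; apply: rel_coef_ext => lc; rewrite !fcoef_cons !fcoef_nil.
by case: (_ == lc); rewrite ?subrr // !addr0 addrK subr0.
Qed.

Lemma tensor_eq0r l : l \in L -> tensor_eq [:: ((l, 0), 1)] [::].
Proof.
move=> hl; have := tensor_eq_sym (tensor_eq_addr hl (rpred0 C) (rpred0 C)).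
rewrite addr0; apply: rel_coef_ext => lc; rewrite !fcoef_cons !fcoef_nil.
by case: (_ == lc); rewrite ?subrr // !addr0 addrK subr0.
Qed.

Lemma tensor_eqNl l c : l \in L -> c \in C ->
  tensor_eq [:: ((- l, c), 1)] [:: ((l, c), -1)].
Proof.
move=> hl hc; have hNl : - l \in L by rewrite rpredN.
have := tensor_eq_addl hl hNl hc; rewrite subrr => h.
apply: rel_coef_ext (tensor_eq_trans (tensor_eq_sym h) (tensor_eq0l hc)) => lc.
rewrite !fcoef_cons !fcoef_nil.
by do 2!case: (_ == lc); rewrite ?subr0 ?sub0r ?addr0 ?add0r ?opprK.
Qed.

Lemma tensor_eqMnl l c n : l \in L -> c \in C ->
  tensor_eq [:: ((l, c), n%:Z)] [:: ((l *+ n, c), 1)].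
Proof.
move=> hl hc; elim: n => [|n IH].
  apply: tensor_eq_sym; apply: tensor_eq_trans (tensor_eq0l hc) _.
  by apply: tensor_eq_coef => lc; rewrite !fcoef_cons !fcoef_nil; case: ifP.
rewrite mulrSr; apply: tensor_eq_trans _ (tensor_eq_sym (tensor_eq_addl (rpredMn n hl) hl hc)).
apply: (@tensor_eq_trans _ ([:: ((l, c), n%:Z)] ++ [:: ((l, c), 1)])).
  apply: tensor_eq_coef => lc; rewrite fcoef_cat !fcoef_cons !fcoef_nil.
  by case: ifP => _; rewrite ?addr0 // -add1n PoszD addrC.
exact: tensor_eq_cat IH (tensor_eq_refl _).
Qed.

Lemma tensor_eqMzl l c z : l \in L -> c \in C ->
  tensor_eq [:: ((l, c), z)] [:: ((l *~ z, c), 1)].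
Proof.
move=> hl hc; case: z => n; first exact: tensor_eqMnl.
rewrite NegzE mulrNz.
apply: tensor_eq_trans _ (tensor_eq_sym (tensor_eqNl (rpredMn n.+1 hl) hc)).
have := tensor_eq_scale (-1) (tensor_eqMnl n.+1 hl hc).
by apply: rel_coef_ext => lc; rewrite !fcoef_cons !fcoef_nil mulrN1 mul1r.
Qed.

Lemma tensor_eq_suml (X : eqType) (r : seq X) (F : X -> B) c :
  {in r, forall x, F x \in L} -> c \in C ->
  tensor_eq [seq ((F x, c), 1) | x <- r] [:: ((\sum_(x <- r) F x, c), 1)].
Proof.
move=> FL hc; elim: r FL => [|x r IH] FL /=.
  by rewrite big_nil; apply: tensor_eq_sym; apply: tensor_eq0l.
have FL' : {in r, forall y, F y \in L} by move=> y yr; apply: FL; rewrite in_cons yr orbT.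
rewrite big_cons; apply: tensor_eq_sym.
apply: tensor_eq_trans (tensor_eq_addl (FL x (mem_head _ _)) _ hc) _.
  by rewrite big_seq rpred_sum.
exact: tensor_eq_cat (tensor_eq_refl [:: _]) (tensor_eq_sym (IH FL')).
Qed.

Lemma tensor_eq_sumr (X : eqType) (r : seq X) (G : X -> B) l :
  l \in L -> {in r, forall x, G x \in C} ->
  tensor_eq [seq ((l, G x), 1) | x <- r] [:: ((l, \sum_(x <- r) G x), 1)].
Proof.
move=> hl GC; elim: r GC => [|x r IH] GC /=.
  by rewrite big_nil; apply: tensor_eq_sym; apply: tensor_eq0r.
have GC' : {in r, forall y, G y \in C} by move=> y yr; apply: GC; rewrite in_cons yr orbT.
rewrite big_cons; apply: tensor_eq_sym.
apply: tensor_eq_trans (tensor_eq_addr hl (GC x (mem_head _ _)) _) _.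
  by rewrite big_seq rpred_sum.
exact: tensor_eq_cat (tensor_eq_refl [:: _]) (tensor_eq_sym (IH GC')).
Qed.

Lemma tensor_eq_splitl (X : eqType) (r : seq X) (F : X -> B) l c z :
  {in r, forall x, F x \in L} -> c \in C -> l = \sum_(x <- r) F x ->
  tensor_eq [:: ((l, c), z)] [seq ((F x, c), z) | x <- r].
Proof.
move=> FL hc ->; rewrite (fscale_map1 _ (fun x => (F x, c))) fscale1.
exact/tensor_eq_scale/tensor_eq_sym/tensor_eq_suml.
Qed.

Lemma tensor_eq_splitr (X : eqType) (r : seq X) (G : X -> B) l c z :
  l \in L -> {in r, forall x, G x \in C} -> c = \sum_(x <- r) G x ->
  tensor_eq [:: ((l, c), z)] [seq ((l, G x), z) | x <- r].
Proof.
move=> hl GC ->; rewrite (fscale_map1 _ (fun x => (l, G x))) fscale1.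
exact/tensor_eq_scale/tensor_eq_sym/tensor_eq_sumr.
Qed.

Lemma tensor_eq_col0 (s : fsum B) (F : (B * B) * int -> B) c :
  {in s, forall e, F e \in L} -> c \in C -> \sum_(e <- s) F e *~ e.2 = 0 ->
  tensor_eq [seq ((F e, c), e.2) | e <- s] [::].
Proof.
move=> FL hc s0.
apply: (@tensor_eq_trans _ [seq ((F e *~ e.2, c), 1) | e <- s]).
  by apply: tensor_eq_map => e es; apply: tensor_eqMzl => //; apply: FL.
apply: tensor_eq_trans (tensor_eq_suml _ hc) _ => [e es|]; first by rewrite rpredMz ?FL.
by rewrite s0; apply: tensor_eq0l.
Qed.

End FormalSums.

Section SigmaRing.
Variables (gT : finGroupType) (B : comNzRingType) (sigma : B -> B)
  (act : gT -> B -> B) (L C : {pred B}).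
Hypotheses (HSA : Sigma_action sigma act) (HL : is_subring L)
  (HLa : forall g x, x \in L -> act g x \in L)
  (HC : is_subring C) (HCa : forall g x, x \in C -> act g x \in C).
#[local] HB.instance Definition _ := GRing.isSubringClosed.Build B L (is_subring_closed HL).
#[local] HB.instance Definition _ := GRing.isSubringClosed.Build B C (is_subring_closed HC).

Lemma act_zmod_morphism g : zmod_morphism (act g).
Proof. by case: HSA => -[h _ _] _ _ _; apply: morph_add_zmod_morphism; case: (h g). Qed.
Lemma act_monoid_morphism g : monoid_morphism (act g).
Proof. by case: HSA => -[h _ _] _ _ _; case: (h g). Qed.
HB.instance Definition _ g := GRing.isZmodMorphism.Build B B (act g) (act_zmod_morphism g).
HB.instance Definition _ g := GRing.isMonoidMorphism.Build B B (act g) (act_monoid_morphism g).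

Lemma sigma_zmod_morphism : zmod_morphism sigma.
Proof. by case: HSA => _ [_ h] _ _; apply: morph_add_zmod_morphism. Qed.
Lemma sigma_monoid_morphism : monoid_morphism sigma.
Proof. by case: HSA => _ [] []. Qed.
HB.instance Definition _ := GRing.isZmodMorphism.Build B B sigma sigma_zmod_morphism.
HB.instance Definition _ := GRing.isMonoidMorphism.Build B B sigma sigma_monoid_morphism.

Lemma act1g x : act 1%g x = x.
Proof. by case: HSA => -[]. Qed.
Lemma actM g h x : act (g * h)%g x = act g (act h x).
Proof. by case: HSA => -[]. Qed.
Lemma actK g : cancel (act g) (act g^-1).
Proof. by move=> x; rewrite -actM mulVg act1g. Qed.
Lemma actVK g : cancel (act g^-1) (act g).
Proof. by move=> x; rewrite -actM mulgV act1g. Qed.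
Lemma sigma_act g x : sigma (act g x) = act g (sigma x).
Proof. by case: HSA. Qed.
Lemma sigma_bij : bijective sigma.
Proof. by case: HSA. Qed.

Definition CL : {pred B} := [pred x | (x \in L) && (sigma x == x)].

Lemma CL_subring : GRing.subring_closed CL.
Proof.
split; first by rewrite inE rpred1 rmorph1 eqxx.
  by move=> x y /andP[xL /eqP sx] /andP[yL /eqP sy]; rewrite inE rpredB //= raddfB /= sx sy.
by move=> x y /andP[xL /eqP sx] /andP[yL /eqP sy]; rewrite inE rpredM //= rmorphM /= sx sy.
Qed.
HB.instance Definition _ := GRing.isSubringClosed.Build B CL CL_subring.

Lemma CL_L x : x \in CL -> x \in L. Proof. by case/andP. Qed.
Lemma CL_fixed x : x \in CL -> sigma x = x. Proof. by case/andP=> _ /eqP. Qed.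
Lemma CL_act g x : x \in CL -> act g x \in CL.
Proof. by case/andP=> xL /eqP sx; rewrite inE HLa //= sigma_act sx. Qed.

Definition actmap g (s : fsum B) : fsum B :=
  [seq ((act g e.1.1, act g e.1.2), e.2) | e <- s].

Lemma tensor_rel_act g r : tensor_rel L C CL r -> tensor_rel L C CL (actmap g r).
Proof.
elim=> {r} /=.
- exact: trel_nil.
- by move=> l l' c lL l'L cC; rewrite raddfD; apply: trel_addl; rewrite ?HLa ?HCa.
- by move=> l c c' lL cC c'C; rewrite raddfD; apply: trel_addr; rewrite ?HLa ?HCa.
- by move=> l a c lL aCL cC; rewrite !rmorphM; apply: trel_bal; rewrite ?HLa ?HCa ?CL_act.
- by move=> s t _ hs _ ht; rewrite /actmap map_cat; apply: trel_cat.
move=> z s _ hs.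
suff -> : actmap g [seq (e.1, e.2 * z) | e <- s] = [seq (e.1, e.2 * z) | e <- actmap g s].
  exact: trel_scale.
by rewrite /actmap -!map_comp.
Qed.

Lemma fcoef_actmap g (s : fsum B) lc :
  fcoef (actmap g s) lc = fcoef s (act g^-1 lc.1, act g^-1 lc.2).
Proof.
rewrite /fcoef big_map; apply: eq_bigl => -[[x y] z]; case: lc => a b /=.
have actE v w : (act g v == w) = (v == act g^-1 w).
  by apply/eqP/eqP => [<-|->]; rewrite ?actK ?actVK.
by rewrite !xpair_eqE /= !actE.
Qed.

Lemma tensor_zero_act g (s : fsum B) :
  tensor_zero L C CL s -> tensor_zero L C CL (actmap g s).
Proof.
case=> r hr e; exists (actmap g r); first exact: tensor_rel_act.
by move=> lc; rewrite !fcoef_actmap e.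
Qed.

Section GenericPoint.
Hypothesis HCL : Sigma1_closed act CL.

Definition FB : Type := {ffun gT -> B}.
HB.instance Definition _ := GRing.NzRing.copy FB (ffun_ring B (1%g : gT)).
HB.instance Definition _ := GRing.PzRing_hasCommutativeMul.Build FB (@ffun_mulC gT B).

Definition act_orbit (b : B) : FB := [ffun g => act g b].

Lemma act_orbit_zmod_morphism : zmod_morphism act_orbit.
Proof. by move=> x y; apply/ffunP => g; rewrite !ffunE rmorphB. Qed.
Lemma act_orbit_monoid_morphism : monoid_morphism act_orbit.
Proof. by split; [|move=> x y]; apply/ffunP => g; rewrite !ffunE ?rmorph1 ?rmorphM. Qed.
HB.instance Definition _ :=
  GRing.isZmodMorphism.Build B FB act_orbit act_orbit_zmod_morphism.
HB.instance Definition _ :=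
  GRing.isMonoidMorphism.Build B FB act_orbit act_orbit_monoid_morphism.

Definition rshift (t : gT) (f : FB) : FB := [ffun g => f (g * t)%g].

Lemma rshift_zmod_morphism t : zmod_morphism (rshift t).
Proof. by move=> x y; apply/ffunP => g; rewrite !ffunE. Qed.
Lemma rshift_monoid_morphism t : monoid_morphism (rshift t).
Proof. by split; [|move=> x y]; apply/ffunP => g; rewrite !ffunE. Qed.
HB.instance Definition _ t :=
  GRing.isZmodMorphism.Build FB FB (rshift t) (rshift_zmod_morphism t).
HB.instance Definition _ t :=
  GRing.isMonoidMorphism.Build FB FB (rshift t) (rshift_monoid_morphism t).

Definition generic_point (j : 'I_(nvar gT 1)) : FB :=
  [ffun g => ((g * (enum_val j).2)%g == 1%g)%:R].

Local Notation generic_eval := (mmap act_orbit generic_point).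

Lemma generic_eval_act t (p : {mpoly B[nvar gT 1]}) :
  generic_eval (spoly_act act t p) = rshift t (generic_eval p).
Proof.
pose k (j : 'I_(nvar gT 1)) : {mpoly B[nvar gT 1]} :=
  'X_(spoly_var (enum_val j).1 (t * (enum_val j).2)%g).
have -> : spoly_act act t p = \sum_(m <- msupp p) (act t p@_m)%:MP * mmap1 k m by [].
rewrite raddf_sum [in RHS]/mmap raddf_sum; apply: eq_bigr => m _ /=.
rewrite !rmorphM /= (@mmapC _ _ _ generic_point act_orbit); congr (_ * _).
  by apply/ffunP => g; rewrite !ffunE actM.
rewrite /mmap1 !rmorph_prod; apply: eq_bigr => i _; rewrite !rmorphXn; congr (_ ^+ _).
rewrite /= (@mmapX _ _ _ generic_point act_orbit) mmap1U.
by apply/ffunP => g; rewrite !ffunE /spoly_var enum_rankK /= mulgA.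
Qed.

Definition generic_ideal (p : {mpoly B[nvar gT 1]}) : Prop :=
  p \is a mpolyOver _ CL /\ generic_eval p = 0.

Lemma generic_ideal_Sigma1 : is_Sigma1_poly_ideal act CL generic_ideal.
Proof.
split.
- by move=> p [].
- by rewrite /generic_ideal mpolyOver0 mmap0.
- by move=> p q [pCL ep] [qCL eq]; split; rewrite ?rpredB // raddfB /= ep eq subrr.
- by move=> a p aCL [pCL ep]; split; rewrite ?rpredM // rmorphM /= ep mulr0.
move=> t p [pCL ep]; split; last by rewrite generic_eval_act ep raddf0.
apply: rpred_sum => m _; apply: rpredM; last first.
  by apply: rpred_prod => i _; apply/rpredX/mpolyOverX.
by rewrite mpolyOverC CL_act //; move/mpolyOverP: pCL.
Qed.

Lemma generic_ideal_has_zero : exists x, spoly_V act CL generic_ideal x.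
Proof.
apply: NNPP => noV; case: HCL => _ /(_ 1%N _ generic_ideal_Sigma1 1 (rpred1 _)) [_].
case=> [x Vx|m [_]]; first by case: noV; exists x.
rewrite expr1n rmorph1 => /ffunP /(_ 1%g) /eqP; rewrite !ffunE.
by rewrite oner_eq0.
Qed.

Local Notation Xt t := ('X_(spoly_var ord0 t) : {mpoly B[nvar gT 1]}).

Lemma generic_eval_X t : generic_eval (Xt t) = [ffun g => ((g * t)%g == 1%g)%:R].
Proof.
rewrite (@mmapX _ _ _ generic_point act_orbit) mmap1U.
by apply/ffunP => g; rewrite !ffunE /spoly_var enum_rankK.
Qed.

Lemma spoly_eval_X x t : spoly_eval act x (Xt t) = act t (x ord0).
Proof. by rewrite /spoly_eval mevalXU /spoly_var enum_rankK. Qed.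

Lemma exists_orthogonal_idempotent : exists u, [/\ u \in CL, u * u = u,
  forall t, t != 1%g -> u * act t u = 0 & \sum_(t : gT) act t u = 1].
Proof.
have [x [xCL xV]] := generic_ideal_has_zero.
have Xt_CL t : Xt t \is a mpolyOver _ CL by apply: mpolyOverX.
exists (x ord0); split=> [||t t1|].
- exact: xCL.
- have: generic_ideal (Xt 1%g * Xt 1%g - Xt 1%g).
    split; first by rewrite rpredB ?rpredM.
    rewrite rmorphB rmorphM /= generic_eval_X; apply/ffunP => g; rewrite !ffunE.
    by case: (_ == _); rewrite ?mulr1 ?mulr0 subrr.
  move/xV; rewrite /spoly_eval mevalB mevalM -!/(spoly_eval act x _) spoly_eval_X.
  by rewrite act1g => /subr0_eq.
- have: generic_ideal (Xt 1%g * Xt t).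
    split; first by rewrite rpredM.
    rewrite rmorphM /= !generic_eval_X; apply/ffunP => g; rewrite !ffunE mulg1.
    have [->|] := eqVneq g 1%g; last by rewrite mul0r.
    by rewrite mul1g (negbTE t1) mulr0.
  move/xV; rewrite /spoly_eval mevalM -!/(spoly_eval act x _) !spoly_eval_X.
  by rewrite act1g.
- have: generic_ideal (\sum_(t : gT) Xt t - 1).
    split; first by rewrite rpredB ?rpred1 // rpred_sum.
    rewrite rmorphB rmorph1 raddf_sum /=.
    under eq_bigr => t _ do rewrite generic_eval_X.
    apply/ffunP => g; rewrite !ffunE sum_ffunE (bigD1 g^-1%g) //= !ffunE mulgV eqxx.
    rewrite big1 ?addr0 ?subrr // => t tg; rewrite ffunE.
    by case: eqP => // gt1; case/eqP: tg; rewrite -(mulKg g t) gt1 mulg1.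
  move/xV; rewrite /spoly_eval mevalB meval1 raddf_sum /=.
  under eq_bigr => t _ do rewrite mevalXU /spoly_var enum_rankK /=.
  by move/subr0_eq.
Qed.

End GenericPoint.

Section Idempotent.
Hypotheses (HLs : forall x, (x \in L) = (sigma x \in L))
  (HLp : Sigma_pseudofield sigma act L).
Variable u : B.
Hypotheses (uCL : u \in CL) (uu : u * u = u)
  (u_orth : forall t, t != 1%g -> u * act t u = 0)
  (u_sum : \sum_(t : gT) act t u = 1).

Definition uL : {pred B} := [pred x | (x \in L) && (u * x == x)].

Lemma uL_L x : x \in uL -> x \in L. Proof. by case/andP. Qed.
Lemma uL_id x : x \in uL -> u * x = x. Proof. by case/andP=> _ /eqP. Qed.

Lemma uL_zmod_closed : zmod_closed uL.
Proof.
split=> [|x y]; first by rewrite inE rpred0 mulr0 eqxx.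
rewrite !inE => /andP[xL /eqP ux] /andP[yL /eqP uy].
by rewrite rpredB // mulrBr ux uy eqxx.
Qed.
HB.instance Definition _ := GRing.isZmodClosed.Build B uL uL_zmod_closed.

Lemma uLM a x : a \in L -> x \in uL -> a * x \in uL.
Proof. by rewrite !inE => aL /andP[xL /eqP ux]; rewrite rpredM // mulrCA ux eqxx. Qed.

Lemma uL_sigma x : (sigma x \in uL) = (x \in uL).
Proof.
rewrite !inE -HLs -{1}(CL_fixed uCL) -rmorphM /=.
by rewrite (inj_eq (bij_inj sigma_bij)).
Qed.

Definition uL_ideal (J : B -> Prop) : Prop :=
  [/\ forall x, J x -> x \in uL, J 0, forall x y, J x -> J y -> J (x - y)
    & forall a x, a \in L -> J x -> J (a * x)].

Definition sigma_stable (J : B -> Prop) : Prop := forall x, J x <-> J (sigma x).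

Definition act_span (J : B -> Prop) (x : B) : Prop :=
  exists2 f : gT -> B, forall t, J (f t) & x = \sum_(t : gT) act t (f t).

Lemma act_span_ideal J : uL_ideal J -> is_ideal_of L (act_span J).
Proof.
case=> JuL J0 JB JM; split.
- by move=> _ [f Jf ->]; apply: rpred_sum => t _; apply/HLa/uL_L/JuL.
- by exists (fun=> 0) => //; rewrite big1 // => t _; rewrite raddf0.
- move=> _ _ [f Jf ->] [f' Jf' ->]; exists (fun t => f t - f' t) => [t|]; first exact: JB.
  by rewrite -sumrB; apply: eq_bigr => t _; rewrite raddfB.
- move=> a _ aL [f Jf ->]; exists (fun t => act t^-1 a * f t) => [t|].
    by apply: JM; [apply: HLa | apply: Jf].
  by rewrite mulr_sumr; apply: eq_bigr => t _; rewrite rmorphM /= actVK.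
Qed.

Lemma act_span_stable J : sigma_stable J -> Sigma_stable_set sigma act (act_span J).
Proof.
move=> Js; have [si _ siK] := sigma_bij; split.
  move=> g _ [f Jf ->]; exists (fun t => f (g^-1 * t)%g) => [t|]; first exact: Jf.
  rewrite raddf_sum [RHS](reindex_inj (mulgI g)) /=.
  by apply: eq_bigr => t _; rewrite mulKg actM.
move=> x; split=> [[f Jf ->]|[f Jf e]].
  exists (sigma \o f) => [t|]; first exact: (Js _).1.
  by rewrite raddf_sum /=; apply: eq_bigr => t _; rewrite sigma_act.
exists (si \o f) => [t|]; first by apply/(Js _).2; rewrite /= siK.
apply: (bij_inj sigma_bij); rewrite e raddf_sum /=; apply: eq_bigr => t _.
by rewrite sigma_act /= siK.
Qed.

(* [act_span J] is a nonzero [Sigma]-ideal of [L], so it contains [u]; multiplying a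
   representation of [u] by [u] kills every translate but the one at [1]. *)
Lemma uL_sigma_simple J : uL_ideal J -> sigma_stable J ->
  forall m, J m -> m != 0 -> J u.
Proof.
move=> JI Js m Jm m0; have [JuL J0 _ _] := JI.
have Km : act_span J m.
  exists (fun t => if t == 1%g then m else 0) => [t|]; first by case: eqP.
  rewrite (bigD1 1%g) //= eqxx act1g big1 ?addr0 // => t /negbTE ->.
  by rewrite raddf0.
case: HLp => _ [_ /(_ _ (act_span_ideal JI) (act_span_stable Js))] [K0|KL].
  by move/K0: Km => /eqP; rewrite (negbTE m0).
have [f Jf fu] : act_span J u by apply/KL/CL_L.
suff -> : u = f 1%g by [].
rewrite -{1}uu {2}fu mulr_sumr (bigD1 1%g) //= act1g uL_id ?big1 ?addr0 ?JuL //.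
move=> t t1; rewrite -(uL_id (JuL _ (Jf t))) rmorphM /= mulrA u_orth //.
by rewrite mul0r.
Qed.

Section Combinations.
Hypotheses (HCs : forall x, x \in C -> sigma x = x) (CL_C : {subset CL <= C}).

Definition lincomb (g : nat -> B) (bs : seq B) : B :=
  \sum_(j < size bs) g j * nth 0 bs j.

Lemma lincomb_cons g b bs :
  lincomb g (b :: bs) = g 0%N * b + lincomb (fun j => g j.+1) bs.
Proof. by rewrite /lincomb big_ord_recl. Qed.

Lemma lincombB g g' bs :
  lincomb (fun j => g j - g' j) bs = lincomb g bs - lincomb g' bs.
Proof. by rewrite /lincomb -sumrB; apply: eq_bigr => j _; rewrite mulrBl. Qed.

Lemma lincombMl a g bs : lincomb (fun j => a * g j) bs = a * lincomb g bs.
Proof. by rewrite /lincomb mulr_sumr; apply: eq_bigr => j _; rewrite mulrA. Qed.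

Lemma lincombN g bs : lincomb (fun j => - g j) bs = - lincomb g bs.
Proof. by rewrite /lincomb -sumrN; apply: eq_bigr => j _; rewrite mulNr. Qed.

Lemma lincomb_sigma g bs : {subset bs <= C} ->
  sigma (lincomb g bs) = lincomb (sigma \o g) bs.
Proof.
move=> bsC; rewrite raddf_sum /=; apply: eq_bigr => j _.
by rewrite rmorphM /= (HCs (bsC _ (mem_nth 0 (ltn_ord j)))).
Qed.

Definition in_CL_span (bs : seq B) (v : B) : Prop :=
  exists2 f : nat -> B, (forall j, (j < size bs)%N -> f j \in CL) & v = lincomb f bs.

Fixpoint uL_indep (bs : seq B) : Prop :=
  if bs is b :: bs' then ~ in_CL_span bs' (u * b) /\ uL_indep bs' else True.

Definition uL_free (bs : seq B) : Prop :=
  forall m, (forall j, (j < size bs)%N -> m j \in uL) -> lincomb m bs = 0 ->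
  forall j, (j < size bs)%N -> m j = 0.

Definition relation_heads (b : B) (bs : seq B) (x : B) : Prop :=
  x \in uL /\
  exists2 g, (forall j, (j < size bs)%N -> g j \in uL) & x * b + lincomb g bs = 0.

Lemma relation_heads_ideal b bs : uL_ideal (relation_heads b bs).
Proof.
split.
- by move=> x [].
- split; first exact: rpred0.
  exists (fun=> 0) => [j _|]; first exact: rpred0.
  by rewrite mul0r add0r /lincomb big1 // => j _; rewrite mul0r.
- move=> x y [xuL [g guL eg]] [yuL [g' g'uL eg']]; split; first exact: rpredB.
  exists (fun j => g j - g' j) => [j jb|]; first by rewrite rpredB ?guL ?g'uL.
  by rewrite lincombB mulrBl addrACA -opprD eg eg' subrr.
move=> a x aL [xuL [g guL eg]]; split; first exact: uLM.
exists (fun j => a * g j) => [j jb|]; first by apply: uLM => //; apply: guL.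
by rewrite lincombMl -mulrA -mulrDr eg mulr0.
Qed.

Lemma sigma_relation x g b bs : b \in C -> {subset bs <= C} ->
  sigma (x * b + lincomb g bs) = sigma x * b + lincomb (sigma \o g) bs.
Proof. by move=> bC bsC; rewrite rmorphD rmorphM /= (HCs bC) lincomb_sigma. Qed.

Lemma relation_heads_sigma b bs : b \in C -> {subset bs <= C} ->
  sigma_stable (relation_heads b bs).
Proof.
move=> bC bsC; have [si _ siK] := sigma_bij.
have sigma_rel := sigma_relation _ _ bC bsC.
move=> x; split=> [[xuL [g guL eg]]|[xuL [g guL eg]]]; split.
- by rewrite uL_sigma.
- exists (sigma \o g) => [j jb|]; first by rewrite /= uL_sigma guL.
  by rewrite -sigma_rel eg raddf0.
- by rewrite -uL_sigma.
exists (si \o g) => [j jb|]; first by rewrite -uL_sigma /= siK guL.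
apply: (bij_inj sigma_bij); rewrite sigma_rel raddf0 -eg; congr (_ + _).
by apply: eq_bigr => j _; rewrite /= siK.
Qed.

(* Normalize a relation with nonzero head to head [u] by [sigma]-simplicity of
   [uL]; comparing it with its [sigma]-image shows that its other coefficients
   are [sigma]-invariant, so [u * b] lies in the [CL]-span of [bs]. *)
Lemma uL_free_cons b bs : b \in C -> {subset bs <= C} ->
  ~ in_CL_span bs (u * b) -> uL_free bs -> uL_free (b :: bs).
Proof.
move=> bC bsC bs_span bs_free m muL; rewrite lincomb_cons => rel.
have m0 : m 0%N = 0.
  have [//|m0_neq] := eqVneq (m 0%N) 0; case: bs_span.
  have [_ [g guL eg]] : relation_heads b bs u.
    apply: (uL_sigma_simple (relation_heads_ideal b bs) (relation_heads_sigma bC bsC)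
              _ m0_neq).
    by split; [apply: muL | exists (fun j => m j.+1) => // j; apply: (muL j.+1)].
  have eg_sigma : u * b + lincomb (sigma \o g) bs = 0.
    by rewrite -(CL_fixed uCL) -sigma_relation // eg raddf0.
  have g_fixed j : (j < size bs)%N -> sigma (g j) = g j.
    move=> jb; apply/eqP; rewrite -subr_eq0; apply/eqP; move: j jb.
    apply: bs_free => [j jb|]; first by rewrite rpredB ?uL_sigma ?guL.
    rewrite lincombB; apply/eqP; rewrite subr_eq0; apply/eqP.
    by apply: (addrI (u * b)); rewrite [LHS]eg_sigma eg.
  exists (fun j => - g j) => [j jb|].
    by rewrite rpredN inE (uL_L (guL j jb)) g_fixed ?eqxx.
  by rewrite lincombN; apply/eqP; rewrite -addr_eq0 eg.
case=> [|j] jb; first exact: m0.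
apply: (bs_free (fun j => m j.+1)) jb => [k kb|]; first exact: (muL k.+1).
by rewrite -rel m0 mul0r add0r.
Qed.

Lemma uL_indep_free bs : {subset bs <= C} -> uL_indep bs -> uL_free bs.
Proof.
elim: bs => [_ _ m _ _ j //|b bs IH] bbsC [bs_span bs_indep].
have bsC : {subset bs <= C} by move=> x xbs; apply: bbsC; rewrite in_cons xbs orbT.
by apply: uL_free_cons => //; [apply: bbsC; rewrite mem_head | apply: IH].
Qed.

Lemma exists_uL_basis (cs : seq B) : {subset cs <= C} ->
  exists bs, [/\ {subset bs <= C}, uL_indep bs &
    exists A : B -> nat -> B, forall c, c \in cs ->
      (forall j, (j < size bs)%N -> A c j \in CL) /\ u * c = lincomb (A c) bs].
Proof.
elim: cs => [_|c cs IH ccsC]; first by exists [::]; split=> //; exists (fun _ _ => 0).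
have [|bs [bsC bs_indep [A hA]]] := IH.
  by move=> x xcs; apply: ccsC; rewrite in_cons xcs orbT.
have cC : c \in C by apply: ccsC; rewrite mem_head.
have [[a aCL uc] | uc_span] := classic (in_CL_span bs (u * c)).
  exists bs; split=> //; exists (fun c' => if c' == c then a else A c') => c'.
  by rewrite in_cons; case: eqP => [-> _ | _ /= /hA].
exists (c :: bs); split=> //.
  by move=> x; rewrite in_cons => /predU1P[->|/bsC].
exists (fun c' j => if c' == c then (if j == 0%N then u else 0)
                   else (if j == 0%N then 0 else A c' j.-1)) => c'.
rewrite in_cons; case: eqP => [-> _ | _ /= /hA[AC ->]]; rewrite lincomb_cons /=.
  split=> [[|j] _ //|]; first exact: rpred0.
  by rewrite /lincomb big1 ?addr0 // => j _; rewrite mul0r.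
by rewrite mul0r add0r; split=> // -[|j] jb; [exact: rpred0 | exact: AC].
Qed.

Lemma tensor_mult_lincomb (t : fsum B) (bs : seq B) (A : B -> nat -> B) :
  (forall e, e \in t -> e.1.1 \in uL /\ u * e.1.2 = lincomb (A e.1.2) bs) ->
  tensor_mult t = lincomb (fun j => \sum_(e <- t) (e.1.1 * A e.1.2 j) *~ e.2) bs.
Proof.
move=> hA; rewrite /lincomb /tensor_mult.
under [RHS]eq_bigr => j _ do rewrite mulr_suml.
rewrite exchange_big /=; apply: eq_big_seq => e et; have [luL uc] := hA e et.
have -> : e.1.1 * e.1.2 = e.1.1 * (u * e.1.2) by rewrite mulrA (mulrC _ u) uL_id.
rewrite uc -lincombMl mulrz_suml.
by apply: eq_bigr => j _; rewrite mulrzAl.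
Qed.

Lemma tensor_eq_uL_lincomb l c z (a : nat -> B) (bs : seq B) :
  l \in uL -> c \in C -> {subset bs <= C} ->
  (forall j, (j < size bs)%N -> a j \in CL) -> u * c = lincomb a bs ->
  tensor_eq L C CL [:: ((l, c), z)]
    [seq ((l * a j, nth 0 bs j), z) | j : 'I_(size bs) <- index_enum 'I_(size bs)].
Proof.
move=> luL cC bsC aCL uc; have lL := uL_L luL.
apply: (@tensor_eq_trans _ _ _ _ _ [:: ((l * u, c), z)]).
  by rewrite mulrC (uL_id luL); apply: tensor_eq_refl.
apply: (@tensor_eq_trans _ _ _ _ _ [:: ((l, u * c), z)]).
  rewrite (fscale1 (l * u, c)) (fscale1 (l, u * c)).
  exact/tensor_eq_scale/(tensor_eq_bal lL uCL cC).
apply: tensor_eq_trans (tensor_eq_splitr CL HC _ lL _ uc) _.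
  by move=> j _; rewrite rpredM //; [apply/CL_C/aCL | apply/bsC/mem_nth].
rewrite (fscale_map1 _ (fun j : 'I_(size bs) => (l, _))).
rewrite (fscale_map1 _ (fun j : 'I_(size bs) => (l * a j, _))).
apply: tensor_eq_scale; apply: tensor_eq_map => j _.
by apply/tensor_eq_sym/tensor_eq_bal; [| apply: aCL | apply/bsC/mem_nth].
Qed.

Lemma uL_tensor_injective (t : fsum B) :
  (forall e, e \in t -> e.1.1 \in uL /\ e.1.2 \in C) ->
  tensor_mult t = 0 -> tensor_zero L C CL t.
Proof.
move=> tuLC t0.
have [|bs [bsC bs_indep [A hA]]] := @exists_uL_basis [seq e.1.2 | e <- t].
  by move=> _ /mapP[e et ->]; case: (tuLC e et).
have {}hA e : e \in t -> (forall j, (j < size bs)%N -> A e.1.2 j \in CL) /\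
    u * e.1.2 = lincomb (A e.1.2) bs by move=> et; apply/hA/map_f.
have col0 : forall j, (j < size bs)%N -> \sum_(e <- t) (e.1.1 * A e.1.2 j) *~ e.2 = 0.
  apply: (uL_indep_free bsC bs_indep) => [j jb|].
    rewrite big_seq rpred_sum // => e et; rewrite rpredMz // mulrC uLM //.
      by apply/CL_L; case: (hA e et) => /(_ j jb).
    by case: (tuLC e et).
  rewrite -(@tensor_mult_lincomb t bs A) // => e et.
  by split; [case: (tuLC e et) | case: (hA e et)].
pose F (e : (B * B) * int) (j : 'I_(size bs)) := ((e.1.1 * A e.1.2 j, nth 0 bs j), e.2).
apply/tensor_zeroP; rewrite -[t]flatten_seq1.
apply: (@tensor_eq_trans _ _ _ _ _
  (flatten [seq [seq F e j | j <- index_enum 'I_(size bs)] | e <- t])).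
  apply: tensor_eq_flatten => -[[l c] z] et /=.
  have [[luL cC] [AC uc]] := (tuLC _ et, hA _ et).
  exact: tensor_eq_uL_lincomb.
apply: tensor_eq_trans (tensor_eq_exchange L C CL t (index_enum 'I_(size bs)) F) _.
apply: tensor_eq_trans (tensor_eq_flatten_nil L C CL (index_enum 'I_(size bs))).
apply: tensor_eq_flatten => j _; apply: (tensor_eq_col0 CL HL _ _ (col0 j (ltn_ord j))).
  move=> e et; apply: rpredM; first by case: (tuLC e et) => /uL_L.
  by apply/CL_L; case: (hA e et) => /(_ j (ltn_ord j)).
by apply/bsC/mem_nth.
Qed.

(* [L] is the direct sum of the translates [act t u * L], and the [t]-th
   component of a tensor is the [t]-translate of one in [uL (x) C]. *)
Lemma idempotent_tensor_mult_injective : tensor_mult_injective L C CL.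
Proof.
move=> s sLC s0; pose G t (e : (B * B) * int) := ((act t u * e.1.1, e.1.2), e.2).
apply/tensor_zeroP; rewrite -[s]flatten_seq1.
apply: (@tensor_eq_trans _ _ _ _ _ (flatten [seq [seq G t e | t <- index_enum gT] | e <- s])).
  apply: tensor_eq_flatten => -[[l c] z] es /=; have /andP[lL cC] := sLC _ es.
  apply: (tensor_eq_splitl CL HL) => //= [t _|]; first by rewrite rpredM ?HLa ?(CL_L uCL).
  by rewrite -mulr_suml u_sum mul1r.
apply: tensor_eq_trans (tensor_eq_exchange L C CL s (index_enum gT) (fun e t => G t e)) _.
apply: tensor_eq_trans (tensor_eq_flatten_nil L C CL (index_enum gT)).
apply: tensor_eq_flatten => t _; apply/tensor_zeroP.
pose s' := [seq ((u * act t^-1 e.1.1, act t^-1 e.1.2), e.2) | e <- s].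
have -> : [seq G t e | e <- s] = actmap t s'.
  by rewrite /actmap -map_comp; apply: eq_map => e /=; rewrite rmorphM /= !actVK.
apply: tensor_zero_act; apply: uL_tensor_injective.
  move=> _ /mapP[e es ->] /=; have /andP[lL cC] := sLC e es.
  split; last exact: HCa.
  by rewrite inE rpredM ?HLa ?(CL_L uCL) //= mulrA uu.
transitivity (act t^-1 (act t u * tensor_mult s)); last by rewrite s0 mulr0 raddf0.
rewrite /tensor_mult big_map mulr_sumr raddf_sum; apply: eq_bigr => e _ /=.
by rewrite mulrzAr raddfMz /= !rmorphM /= actK mulrA.
Qed.

End Combinations.
End Idempotent.
End SigmaRing.

Theorem corollary1 (gT : finGroupType) (B : comNzRingType)
  (sigma : B -> B) (act : gT -> B -> B) (L C : {pred B}) :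
  abelian [set: gT] ->
  Sigma_action sigma act ->
  is_subring L ->
  (forall x, (x \in L) = (sigma x \in L)) ->
  (forall g x, x \in L -> act g x \in L) ->
  Sigma_pseudofield sigma act L ->
  Sigma1_closed act [pred x | (x \in L) && (sigma x == x)] ->
  is_subring C ->
  (forall g x, x \in C -> act g x \in C) ->
  (forall x, x \in C -> sigma x = x) ->
  (forall x, x \in L -> sigma x = x -> x \in C) ->
  tensor_mult_injective L C [pred x | (x \in L) && (sigma x == x)].
Proof.
move=> _ HSA HL HLs HLa HLp HCL HC HCa HCs HLC.
have [u [uCL uu u_orth u_sum]] := exists_orthogonal_idempotent HSA HL HLa HCL.
apply: (idempotent_tensor_mult_injective HSA HL HLa HC HCa HLs HLp uCL uu u_orth u_sum HCs).
by move=> x /andP[xL /eqP]; apply: HLC.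
Qed.
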